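(* Assume MA($\sigma$-centered). If $\mathcal{I}$ is a strongly unboring ideal, then there is an uncountable separable Mr\'owka space in $\mathrm{FinBW}(\mathcal{I})$.
   Context: An ideal on an infinite countable set $X$ is a family $\mathcal{I}\subseteq\mathcal{P}(X)$ closed under subsets and finite unions, containing all finite subsets, with $X\notin\mathcal{I}$. $\mathcal{I}|C=\{A\cap C:A\in\mathcal{I}\}$. A space $X$ is in $\mathrm{FinBW}(\mathcal{I})$ if $X$ is Hausdorff and for every sequence $(x_n)_{n\in\bigcup\mathcal{I}}$ in $X$ there is $A\notin\mathcal{I}$ with $(x_n)_{n\in A}$ convergent in $X$. $\mathcal{D}_{\mathcal{I}}$ is the set of functions $f:\bigcup\mathcal{I}\to\omega$ with $f^{-1}[\{n\}]\in\mathcal{I}$ for all $n$. An ideal $\mathcal{I}$ on $X$ is $\omega$-diagonalizable by $\mathcal{I}^\star$-universal sets if there are families $\mathcal{Z}_k\subseteq[X]^{<\omega}\setminus\{\emptyset\}$, $k\in\omega$, such that for each $k$ and each $A\in\mathcal{I}$ there is $Z\in\mathcal{Z}_k$ with $Z\cap A=\emptyset$, and for each $A\in\mathcal{I}$ there is $k$ such that no $Z\in\mathcal{Z}_k$ is contained in $A$. $\mathcal{I}$ is strongly unboring if for each $f\in\mathcal{D}_{\mathcal{I}}$ there is $C\notin\mathcal{I}$ such that $f|C$ is finite-to-one and $\mathcal{I}|C$ (an ideal on $C$) is $\omega$-diagonalizable by $(\mathcal{I}|C)^\star$-universal sets. A Mr\'owka space is $\Phi(\mathcal{A})$ for an infinite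 almost disjoint family $\mathcal{A}$ of infinite subsets of $\omega$: underlying set $\omega\cup\mathcal{A}\cup\{\infty\}$, points of $\omega$ isolated, basic neighbourhoods of $A\in\mathcal{A}$ are $\{A\}\cup(A\setminus F)$ ($F\subseteq\omega$ finite), of $\infty$ are $\{\infty\}\cup(\mathcal{A}\setminus G)\cup(\omega\setminus(F\cup\bigcup G))$ ($F\subseteq\omega$, $G\subseteq\mathcal{A}$ finite). *)

From Stdlib Require Import List.
Import ListNotations.

Definition finite_set {T : Type} (S : T -> Prop) : Prop :=
  exists l : list T, forall x, S x -> In x l.

Definition subset {T : Type} (S S' : T -> Prop) : Prop := forall x, S x -> S' x.

Definition countably_infinite (X : Type) : Prop :=
  exists f : nat -> X, (forall n m, f n = f m -> n = m) /\ (forall x, exists n, f n = x).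

Definition countable_type (T : Type) : Prop :=
  exists f : nat -> T, forall x, exists n, f n = x.

Definition is_ideal {X : Type} (I : (X -> Prop) -> Prop) : Prop :=
  (forall A B, I B -> subset A B -> I A) /\
  (forall A B, I A -> I B -> I (fun x => A x \/ B x)) /\
  (forall A, finite_set A -> I A) /\
  ~ I (fun _ => True).

Definition restr {X : Type} (I : (X -> Prop) -> Prop) (C : X -> Prop) : (X -> Prop) -> Prop :=
  fun A => exists A', I A' /\ forall x, A x <-> (A' x /\ C x).

Definition omega_diag {X : Type} (J : (X -> Prop) -> Prop) (C : X -> Prop) : Prop :=
  exists Zs : nat -> (X -> Prop) -> Prop,
    (forall k Z, Zs k Z -> finite_set Z /\ (exists x, Z x) /\ subset Z C) /\
    (forall k A, J A -> exists Z, Zs k Z /\ forall x, ~ (Z x /\ A x)) /\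
    (forall A, J A -> exists k, forall Z, Zs k Z -> ~ subset Z A).

(** D_I: functions whose fibers are in I (here ⋃I = X since I contains singletons). *)
Definition in_D {X : Type} (I : (X -> Prop) -> Prop) (f : X -> nat) : Prop :=
  forall n, I (fun x => f x = n).

Definition finite_to_one_on {X : Type} (f : X -> nat) (C : X -> Prop) : Prop :=
  forall n, finite_set (fun x => C x /\ f x = n).

Definition strongly_unboring {X : Type} (I : (X -> Prop) -> Prop) : Prop :=
  forall f, in_D I f ->
    exists C : X -> Prop, ~ I C /\ finite_to_one_on f C /\ omega_diag (restr I C) C.

Definition lt_continuum (K : Type) : Prop :=
  (exists g : K -> (nat -> bool), forall a b, g a = g b -> a = b) /\
  ~ (exists h : (nat -> bool) -> K, forall a b, h a = h b -> a = b).

Definition MA_sigma_centered : Prop :=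
  forall (P : Type) (le : P -> P -> Prop),
    (forall p, le p p) ->
    (forall p q r, le p q -> le q r -> le p r) ->
    (exists Ps : nat -> P -> Prop,
        (forall p, exists n, Ps n p) /\
        (forall n (l : list P), (forall p, In p l -> Ps n p) ->
            exists r, forall p, In p l -> le r p)) ->
    forall (K : Type) (D : K -> P -> Prop),
      lt_continuum K ->
      (forall i p, exists q, D i q /\ le q p) ->
      exists G : P -> Prop,
        (exists p, G p) /\
        (forall p q, G p -> le p q -> G q) /\
        (forall p q, G p -> G q -> exists r, G r /\ le r p /\ le r q) /\
        (forall i, exists p, G p /\ D i p).

Definition mrowka_family (A : (nat -> Prop) -> Prop) : Prop :=
  ~ finite_set A /\
  (forall a, A a -> ~ finite_set a) /\
  (forall a b, A a -> A b -> a <> b -> finite_set (fun n => a n /\ b n)).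

Inductive mpoint (A : (nat -> Prop) -> Prop) : Type :=
| MNat : nat -> mpoint A
| MAd : forall a : nat -> Prop, A a -> mpoint A
| MInf : mpoint A.
Arguments MNat {A} n.
Arguments MAd {A} a h.
Arguments MInf {A}.

Definition basic_nbhd (A : (nat -> Prop) -> Prop) (p : mpoint A) (U : mpoint A -> Prop) : Prop :=
  match p with
  | MNat n => forall q, U q <-> q = MNat n
  | MAd a _ => exists F : nat -> Prop, finite_set F /\
      forall q, U q <-> (q = p \/ exists k, q = MNat k /\ a k /\ ~ F k)
  | MInf => exists (F : nat -> Prop) (G : list (nat -> Prop)),
      finite_set F /\ (forall b, In b G -> A b) /\
      forall q, U q <->
        (q = MInf \/
         (exists b h, q = MAd b h /\ ~ In b G) \/
         (exists k, q = MNat k /\ ~ F k /\ ~ (exists b, In b G /\ b k)))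
  end.

Definition mopen (A : (nat -> Prop) -> Prop) (U : mpoint A -> Prop) : Prop :=
  forall p, U p -> exists V, basic_nbhd A p V /\ subset V U.

Definition mhausdorff (A : (nat -> Prop) -> Prop) : Prop :=
  forall p q : mpoint A, p <> q ->
    exists U V, mopen A U /\ mopen A V /\ U p /\ V q /\ forall r, ~ (U r /\ V r).

Definition mseparable (A : (nat -> Prop) -> Prop) : Prop :=
  exists D : mpoint A -> Prop,
    (exists f : nat -> mpoint A, forall p, D p -> exists n, f n = p) /\
    (forall U, mopen A U -> (exists p, U p) -> exists p, U p /\ D p).

Definition mconverges {X : Type} (A : (nat -> Prop) -> Prop)
    (x : X -> mpoint A) (B : X -> Prop) : Prop :=
  exists p, forall U, mopen A U -> U p -> finite_set (fun n => B n /\ ~ U (x n)).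

Definition FinBW {X : Type} (I : (X -> Prop) -> Prop) (A : (nat -> Prop) -> Prop) : Prop :=
  mhausdorff A /\
  forall x : X -> mpoint A, exists B, ~ I B /\ mconverges A x B.

(* Well-order the continuum so that every proper initial segment has fewer
   than 𝔠 elements, and enumerate along it all pairs (D, y) with D ⊆ X and
   y : X -> ω.  By recursion we choose an almost disjoint family (a_w) of
   infinite subsets of ω: at stage w, if the ideal J_w = {S : D ∩ y⁻¹[S] ∈ I}
   of the w-th pair is ω-diagonalizable and contains every earlier a_v, then
   MA(σ-centered), applied to finite approximations, gives a_w ∉ J_w almost
   disjoint from the fewer than 𝔠 earlier sets.  In Φ({a_w}) a sequence
   (x_n) either has an I-positive constant part, or strong unboringness gives
   an I-positive C on which it is finite-to-one with I|C ω-diagonalizable.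
   Then either the part of C sent to points of the family is I-positive and
   converges to ∞, or the part D sent to ω, with y = x on D, is one of the
   enumerated pairs; its ideal is diagonalizable, so some a_v ∉ J_w, and
   (x_n) restricted to D ∩ y⁻¹[a_v] converges to a_v. *)

From Stdlib Require Import List Arith Lia FinFun Wellfounded.
From Stdlib Require Import Classical ClassicalEpsilon FunctionalExtensionality
  PropExtensionality ProofIrrelevance.
From Stdlib Require Cantor.
From mathcomp Require ssreflect ssrbool eqtype boolp wochoice.
Import ListNotations.

Set Bullet Behavior "Strict Subproofs".
Unset Asymmetric Patterns.

Definition disjoint {T} (P Q : T -> Prop) : Prop := forall x, ~ (P x /\ Q x).

Definition almost_disjoint (P Q : nat -> Prop) : Prop :=
  finite_set (fun n => P n /\ Q n).

Definition coinfinite (P : nat -> Prop) : Prop := ~ finite_set (fun n => ~ P n).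

Definition list_union {T U} (L : list T) (b : T -> U -> Prop) : U -> Prop :=
  fun u => exists t, In t L /\ b t u.

Lemma finite_empty {T} (P : T -> Prop) : (forall x, ~ P x) -> finite_set P.
Proof. intros H; exists []; intros x Hx; destruct (H x Hx). Qed.

Lemma finite_subset {T} (P Q : T -> Prop) : finite_set P -> subset Q P -> finite_set Q.
Proof. intros [l Hl] H; exists l; intros x Hx; apply Hl, H, Hx. Qed.

Lemma finite_union {T} (P Q : T -> Prop) :
  finite_set P -> finite_set Q -> finite_set (fun x => P x \/ Q x).
Proof.
  intros [l Hl] [l' Hl']; exists (l ++ l'); intros x [Hx | Hx]; apply in_or_app; auto.
Qed.

Lemma finite_list_union {T U} (L : list T) (b : T -> U -> Prop) :
  (forall t, In t L -> finite_set (b t)) -> finite_set (list_union L b).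
Proof.
  induction L as [|t L IH]; intros H.
  - apply finite_empty; intros u (t & [] & _).
  - apply finite_subset with (fun u => b t u \/ list_union L b u).
    + apply finite_union; [apply H; left; reflexivity |].
      apply IH; intros t' Ht'; apply H; right; exact Ht'.
    + intros u (t' & [<- | Ht'] & Hu); [left; exact Hu | right; exists t'; auto].
Qed.

Lemma finite_In {T} (l : list T) : finite_set (fun x => In x l).
Proof. exists l; auto. Qed.

Lemma finite_singleton {T} (a : T) : finite_set (fun x => x = a).
Proof. exists [a]; intros x ->; left; reflexivity. Qed.

Lemma finite_listing {T} (P : T -> Prop) : finite_set P -> exists l, forall x, In x l <-> P x.
Proof.
  intros [l Hl].
  exists (filter (fun x => if excluded_middle_informative (P x) then true else false) l).
  intros x; rewrite filter_In.
  destruct (excluded_middle_informative (P x)) as [Hx | Hx]; split; try tauto.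
  - intros _; split; [apply Hl, Hx | reflexivity].
  - intros [_ E]; discriminate.
Qed.

Lemma finite_image {T U} (P : T -> Prop) (f : T -> U) :
  finite_set P -> finite_set (fun u => exists t, P t /\ f t = u).
Proof. intros [l Hl]; exists (map f l); intros u (t & Ht & <-); apply in_map, Hl, Ht. Qed.

Lemma infinite_nat_unbounded (P : nat -> Prop) :
  ~ finite_set P <-> forall N, exists n, N <= n /\ P n.
Proof.
  split.
  - intros HP N; apply NNPP; intros HN; apply HP.
    exists (seq 0 N); intros n Hn; apply in_seq.
    destruct (le_lt_dec N n); [destruct HN; eauto | lia].
  - intros H [l Hl]; destruct (H (S (list_max l))) as (n & Hn & Pn).
    pose proof (proj1 (list_max_le l (list_max l)) (le_n _)) as Hmax.
    rewrite Forall_forall in Hmax; specialize (Hmax n (Hl n Pn)); lia.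
Qed.

Lemma infinite_diff {T} (P F : T -> Prop) :
  ~ finite_set P -> finite_set F -> exists x, P x /\ ~ F x.
Proof.
  intros HP HF; apply NNPP; intros H; apply HP, finite_subset with (1 := HF).
  intros x Px; apply NNPP; intros Fx; apply H; eauto.
Qed.

Lemma almost_disjoint_sym P Q : almost_disjoint P Q -> almost_disjoint Q P.
Proof. intros H; apply finite_subset with (1 := H); intros n [? ?]; split; assumption. Qed.

Lemma coinfinite_subset (P Q : nat -> Prop) : coinfinite Q -> subset P Q -> coinfinite P.
Proof.
  intros HQ HPQ HP; apply HQ, finite_subset with (1 := HP).
  intros n HnQ HnP; apply HnQ, HPQ, HnP.
Qed.

Lemma coinfinite_false : coinfinite (fun _ => False).
Proof. apply infinite_nat_unbounded; intros N; exists N; split; [reflexivity | tauto]. Qed.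

Lemma coinfinite_union_finite (P E : nat -> Prop) :
  coinfinite P -> finite_set E -> coinfinite (fun n => E n \/ P n).
Proof.
  intros HP HE H; apply HP, finite_subset with (1 := finite_union _ _ HE H).
  intros n Hn; destruct (classic (E n)); [left | right]; tauto.
Qed.

Lemma coinfinite_of_witness (S P : nat -> Prop) :
  ~ finite_set S -> almost_disjoint S P -> coinfinite P.
Proof.
  intros HS HSP HP; apply HS, finite_subset with (1 := finite_union _ _ HP HSP).
  intros n Hn; destruct (classic (P n)); [right | left]; tauto.
Qed.

Lemma bool_seq_not_enumerable : ~ exists e : nat -> nat -> bool, Surjective e.
Proof.
  intros [e He]; destruct (He (fun n => negb (e n n))) as [n Hn].
  assert (H := f_equal (fun f => f n) Hn); simpl in H; destruct (e n n); discriminate.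
Qed.

Lemma surjective_right_inverse {A B} (s : A -> B) :
  Surjective s -> exists r : B -> A, forall b, s (r b) = b.
Proof.
  intros Hs; exists (fun b => proj1_sig (constructive_indefinite_description _ (Hs b))).
  intros b; exact (proj2_sig (constructive_indefinite_description _ (Hs b))).
Qed.

Lemma injective_onto_inverse {A B} (i : A -> B) :
  inhabited A -> Injective i -> exists s : B -> A, Surjective s.
Proof.
  intros inh Hi; exists (fun y => epsilon inh (fun a => i a = y)); intros a; exists (i a).
  apply Hi, (epsilon_spec inh (fun a' => i a' = i a)); eauto.
Qed.

Lemma no_injection_bool_seq_nat : ~ exists h : (nat -> bool) -> nat, Injective h.
Proof.
  intros [h Hh]; apply bool_seq_not_enumerable.
  exact (injective_onto_inverse h (inhabits (fun _ => true)) Hh).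
Qed.

Lemma surjective_bool_seq_uncountable {W} (s : W -> nat -> bool) :
  Surjective s -> ~ exists phi : W -> nat, Injective phi.
Proof.
  intros Hs [phi Hphi]; destruct (surjective_right_inverse s Hs) as [r Hr].
  apply no_injection_bool_seq_nat; exists (fun b => phi (r b)); intros b b' E.
  rewrite <- (Hr b), <- (Hr b'); f_equal; apply Hphi, E.
Qed.

Lemma lt_continuum_nat : lt_continuum nat.
Proof.
  split; [| exact no_injection_bool_seq_nat].
  exists Nat.eqb; intros n m E; apply Nat.eqb_eq; rewrite E; apply Nat.eqb_refl.
Qed.

Fixpoint fresh_list {T} (inh : inhabited T) (n : nat) : list T :=
  match n with
  | 0 => []
  | S n => epsilon inh (fun t => ~ In t (fresh_list inh n)) :: fresh_list inh n
  end.

Lemma finite_or_nat_injection (T : Type) :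
  (exists l : list T, forall t, In t l) \/ exists x : nat -> T, Injective x.
Proof.
  destruct (classic (exists l : list T, forall t, In t l)) as [Hfin | Hinf];
    [left; exact Hfin | right].
  assert (Hfresh : forall l : list T, exists t, ~ In t l).
  { intros l; apply NNPP; intros H; apply Hinf; exists l.
    intros t; apply NNPP; intros Ht; apply H; eauto. }
  destruct (Hfresh []) as [t0 _]; set (inh := inhabits t0).
  set (x := fun n => epsilon inh (fun t => ~ In t (fresh_list inh n))).
  assert (Hx_new : forall n, ~ In (x n) (fresh_list inh n))
    by (intros n; apply (epsilon_spec inh), Hfresh).
  assert (Hx_old : forall m n, m < n -> In (x m) (fresh_list inh n)).
  { intros m n Hmn; induction Hmn; [left; reflexivity | right; exact IHHmn]. }
  exists x; intros m n E.
  destruct (lt_eq_lt_dec m n) as [[H | H] | H]; [exfalso | exact H | exfalso].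
  - apply (Hx_new n); rewrite <- E; auto.
  - apply (Hx_new m); rewrite E; auto.
Qed.

Lemma lt_continuum_index (T : Type) : lt_continuum T ->
  exists (K : Type) (tau : K -> option T) (kap : K -> nat),
    lt_continuum K /\ (forall t, exists i, tau i = Some t) /\ Surjective kap.
Proof.
  intros HT; destruct (finite_or_nat_injection T) as [[l Hl] | [x Hx]].
  - exists nat, (nth_error l), (fun n => n); split; [exact lt_continuum_nat | split].
    + intros t; apply In_nth_error, Hl.
    + intros k; exists k; reflexivity.
  - exists T, Some, (fun t => epsilon (inhabits 0) (fun n => x n = t)).
    split; [exact HT | split].
    + intros t; exists t; reflexivity.
    + intros k; exists (x k); apply Hx, (epsilon_spec (inhabits 0) (fun n => x n = x k)); eauto.
Qed.

Fixpoint list_code (l : list nat) : nat :=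
  match l with
  | [] => 0
  | x :: l => S (Cantor.to_nat (x, list_code l))
  end.

Lemma list_code_injective : Injective list_code.
Proof.
  intros l1; induction l1 as [|x l1 IH]; intros [|y l2] H; try discriminate; [reflexivity|].
  apply Nat.succ_inj, Cantor.to_nat_inj in H; injection H as -> H.
  f_equal; apply IH, H.
Qed.

(* A condition approximates the pair (S1, S2) by finite parts and promises
   finitely many t: whatever is added to either part later avoids [b t]. *)
Section ForcingPoset.
Variables (T : Type) (b : T -> nat -> Prop).

Record cond : Type := Cond {
  part1 : list nat;
  part2 : list nat;
  promises : list T;
  parts_disjoint : forall n, In n part1 -> ~ In n part2 }.

Definition avoids (new old : list nat) (F : list T) : Prop :=
  forall n, In n new -> ~ In n old -> forall t, In t F -> ~ b t n.

Definition extends (q p : cond) : Prop :=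
  incl (part1 p) (part1 q) /\ incl (part2 p) (part2 q) /\ incl (promises p) (promises q) /\
  avoids (part1 q) (part1 p) (promises p) /\ avoids (part2 q) (part2 p) (promises p).

Lemma avoids_trans r q p (Fq Fp : list T) :
  incl Fp Fq -> avoids r q Fq -> avoids q p Fp -> avoids r p Fp.
Proof.
  intros HF Hrq Hqp n Hr Hp t Ht.
  destruct (classic (In n q)); [apply (Hqp n) | apply (Hrq n)]; auto.
Qed.

Lemma extends_refl p : extends p p.
Proof. repeat split; try apply incl_refl; intros n H H'; contradiction. Qed.

Lemma extends_trans r q p : extends r q -> extends q p -> extends r p.
Proof.
  intros (Hrq1 & Hrq2 & HrqF & Hrq1' & Hrq2') (Hqp1 & Hqp2 & HqpF & Hqp1' & Hqp2').
  repeat split; try (eapply incl_tran; eassumption); eapply avoids_trans; eassumption.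
Qed.

Lemma extends_same_parts q p :
  part1 q = part1 p -> part2 q = part2 p -> incl (promises p) (promises q) -> extends q p.
Proof.
  intros E1 E2 HF; unfold extends; rewrite E1, E2.
  repeat split; try apply incl_refl; auto; intros n H H'; contradiction.
Qed.

Definition empty_cond : cond := Cond [] [] [] (fun n H _ => H).

Lemma cond_sigma_centered : exists Ps : nat -> cond -> Prop,
  (forall p, exists n, Ps n p) /\
  (forall n l, (forall p, In p l -> Ps n p) -> exists r, forall p, In p l -> extends r p).
Proof.
  exists (fun n p => Cantor.to_nat (list_code (part1 p), list_code (part2 p)) = n).
  split; [eauto|]; intros n [|p0 l] Hl; [exists empty_cond; intros p [] |].
  exists (Cond (part1 p0) (part2 p0) (flat_map promises (p0 :: l)) (parts_disjoint p0)).
  intros p Hp.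
  assert (E : (list_code (part1 p), list_code (part2 p))
            = (list_code (part1 p0), list_code (part2 p0))).
  { apply Cantor.to_nat_inj; rewrite (Hl p Hp), (Hl p0 (in_eq _ _)); reflexivity. }
  injection E as E1 E2; apply list_code_injective in E1, E2.
  apply extends_same_parts; [symmetry; exact E1 | symmetry; exact E2 |].
  intros t Ht; apply in_flat_map; eauto.
Qed.

Variable Zs : nat -> (nat -> Prop) -> Prop.
Hypothesis Zs_finite : forall k Z, Zs k Z -> finite_set Z.
Hypothesis Zs_avoid : forall k (L : list T) (E : list nat),
  exists Z, Zs k Z /\ forall n, Z n -> ~ In n E /\ forall t, In t L -> ~ b t n.

Lemma fresh_block k L E : exists z,
  (exists Z, Zs k Z /\ forall n, Z n -> In n z) /\
  forall n, In n z -> ~ In n E /\ forall t, In t L -> ~ b t n.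
Proof.
  destruct (Zs_avoid k L E) as (Z & HZ & HZa).
  destruct (finite_listing Z (Zs_finite k Z HZ)) as [z Hz].
  exists z; split; [exists Z; split; [exact HZ | intros n; apply Hz] |].
  intros n Hn; apply HZa, Hz, Hn.
Qed.

Definition meets k (p : cond) : Prop :=
  (exists Z, Zs k Z /\ forall n, Z n -> In n (part1 p)) /\
  (exists Z, Zs k Z /\ forall n, Z n -> In n (part2 p)).

Lemma meets_dense p k (ot : option T) : exists q,
  extends q p /\ meets k q /\ forall t, ot = Some t -> In t (promises q).
Proof.
  destruct (fresh_block k (promises p) (part1 p ++ part2 p)) as (z1 & HZ1 & Hz1).
  destruct (fresh_block k (promises p) (z1 ++ part1 p ++ part2 p)) as (z2 & HZ2 & Hz2).
  assert (Hq : forall n, In n (z1 ++ part1 p) -> ~ In n (z2 ++ part2 p)).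
  { intros n H1 H2; rewrite in_app_iff in H1, H2; destruct H2 as [H2 | H2].
    - apply (proj1 (Hz2 n H2)); rewrite !in_app_iff; tauto.
    - destruct H1 as [H1 | H1]; [| exact (parts_disjoint p n H1 H2)].
      apply (proj1 (Hz1 n H1)); rewrite in_app_iff; tauto. }
  set (F := match ot with Some t => t :: promises p | None => promises p end).
  exists (Cond (z1 ++ part1 p) (z2 ++ part2 p) F Hq); unfold extends, meets.
  cbn [part1 part2 promises]; split; [repeat split | split].
  - apply incl_appr, incl_refl.
  - apply incl_appr, incl_refl.
  - unfold F; destruct ot; [apply incl_tl |]; apply incl_refl.
  - intros n Hn Hp; rewrite in_app_iff in Hn; destruct Hn as [Hn | Hn]; [| contradiction].
    apply (proj2 (Hz1 n Hn)).
  - intros n Hn Hp; rewrite in_app_iff in Hn; destruct Hn as [Hn | Hn]; [| contradiction].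
    apply (proj2 (Hz2 n Hn)).
  - destruct HZ1 as (Z1 & HZ1 & HZ1z); destruct HZ2 as (Z2 & HZ2 & HZ2z).
    split; [exists Z1 | exists Z2]; split; auto; intros n Hn; apply in_or_app; auto.
  - intros t ->; left; reflexivity.
Qed.

Definition directed (G : cond -> Prop) : Prop :=
  forall p q, G p -> G q -> exists r, G r /\ extends r p /\ extends r q.

Definition generic_part (G : cond -> Prop) (part : cond -> list nat) : nat -> Prop :=
  fun n => exists p, G p /\ In n (part p).

Lemma generic_parts_disjoint G :
  directed G -> disjoint (generic_part G part1) (generic_part G part2).
Proof.
  intros HG n [(p & Gp & Hp) (q & Gq & Hq)].
  destruct (HG p q Gp Gq) as (r & _ & Hrp & Hrq).
  apply (parts_disjoint r n); [apply (proj1 Hrp) | apply (proj1 (proj2 Hrq))]; assumption.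
Qed.

Lemma generic_part_almost_disjoint G part p t :
  (forall q p, extends q p -> incl (part p) (part q) /\ avoids (part q) (part p) (promises p)) ->
  directed G -> G p -> In t (promises p) -> almost_disjoint (generic_part G part) (b t).
Proof.
  intros Hpart HG Gp Ht; exists (part p); intros n [(q & Gq & Hq) Hb].
  apply NNPP; intros Hn; destruct (HG p q Gp Gq) as (r & _ & Hrp & Hrq).
  apply (proj2 (Hpart r p Hrp) n) with t; auto.
  apply (proj1 (Hpart r q Hrq)), Hq.
Qed.

Lemma ma_almost_disjoint_pair (MA : MA_sigma_centered) : lt_continuum T ->
  exists S1 S2, disjoint S1 S2 /\
    (forall k, exists Z, Zs k Z /\ subset Z S1) /\ (forall k, exists Z, Zs k Z /\ subset Z S2) /\
    forall t, almost_disjoint S1 (b t) /\ almost_disjoint S2 (b t).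
Proof.
  intros HT; destruct (lt_continuum_index T HT) as (K & tau & kap & HK & Htau & Hkap).
  set (D := fun i p => meets (kap i) p /\ forall t, tau i = Some t -> In t (promises p)).
  destruct (MA cond extends extends_refl extends_trans cond_sigma_centered K D HK)
    as (G & _ & _ & HG & HGD).
  { intros i p; destruct (meets_dense p (kap i) (tau i)) as (q & Hqp & Hq & Ht).
    exists q; split; [split; assumption | exact Hqp]. }
  exists (generic_part G part1), (generic_part G part2).
  split; [exact (generic_parts_disjoint G HG) | split; [| split]].
  - intros k; destruct (Hkap k) as [i <-]; destruct (HGD i) as (p & Gp & ((Z & HZ & HZp) & _) & _).
    exists Z; split; [exact HZ | intros n Hn; exists p; auto].
  - intros k; destruct (Hkap k) as [i <-]; destruct (HGD i) as (p & Gp & (_ & (Z & HZ & HZp)) & _).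
    exists Z; split; [exact HZ | intros n Hn; exists p; auto].
  - intros t; destruct (Htau t) as [i Hi]; destruct (HGD i) as (p & Gp & _ & Hp).
    split; apply generic_part_almost_disjoint with p; auto;
      intros q p' (H1 & H2 & _ & H1' & H2'); split; assumption.
Qed.

End ForcingPoset.

(* Unlike [is_ideal], the whole of ω may belong to a weak ideal. *)
Definition weak_ideal (J : (nat -> Prop) -> Prop) : Prop :=
  (forall P Q, J P -> subset Q P -> J Q) /\
  (forall P Q, J P -> J Q -> J (fun n => P n \/ Q n)) /\
  (forall P, finite_set P -> J P).

Definition diagonalizable (J : (nat -> Prop) -> Prop) : Prop :=
  exists Zs : nat -> (nat -> Prop) -> Prop,
    (forall k Z, Zs k Z -> finite_set Z) /\
    (forall k P, J P -> exists Z, Zs k Z /\ disjoint Z P) /\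
    (forall P, J P -> exists k, forall Z, Zs k Z -> ~ subset Z P).

Lemma weak_ideal_list_union J {T} (L : list T) (b : T -> nat -> Prop) :
  weak_ideal J -> (forall t, In t L -> J (b t)) -> J (list_union L b).
Proof.
  intros (Jsub & Jun & Jfin); induction L as [|t L IH]; intros H.
  - apply Jfin, finite_empty; intros n (t & [] & _).
  - apply Jsub with (fun n => b t n \/ list_union L b n).
    + apply Jun; [apply H; left; reflexivity | apply IH; intros t' Ht'; apply H; right; exact Ht'].
    + intros n (t' & [<- | Ht'] & Hn); [left; exact Hn | right; exists t'; auto].
Qed.

Lemma weak_ideal_infinite J P : weak_ideal J -> ~ J P -> ~ finite_set P.
Proof. intros (_ & _ & Jfin) HP HfP; exact (HP (Jfin P HfP)). Qed.

Lemma diagonalizable_pair (MA : MA_sigma_centered) {T} J (b : T -> nat -> Prop) :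
  lt_continuum T -> weak_ideal J -> diagonalizable J -> (forall t, J (b t)) ->
  exists S1 S2, disjoint S1 S2 /\ ~ J S1 /\ ~ J S2 /\
    forall t, almost_disjoint S1 (b t) /\ almost_disjoint S2 (b t).
Proof.
  intros HT HJ (Zs & Zs_finite & Zs_avoid & Zs_escape) Hb.
  assert (Hnot : forall P, (forall k, exists Z, Zs k Z /\ subset Z P) -> ~ J P).
  { intros P HP HJP; destruct (Zs_escape P HJP) as [k Hk].
    destruct (HP k) as (Z & HZ & HZP); exact (Hk Z HZ HZP). }
  destruct (ma_almost_disjoint_pair T b Zs Zs_finite) as (S1 & S2 & H12 & H1 & H2 & Had);
    [| exact MA | exact HT |].
  - intros k L E; destruct (Zs_avoid k (fun n => In n E \/ list_union L b n)) as (Z & HZ & HZd).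
    { pose proof HJ as (_ & Jun & Jfin).
      apply Jun; [apply Jfin, finite_In | apply weak_ideal_list_union; auto]. }
    exists Z; split; [exact HZ |]; intros n Zn; split.
    + intros En; apply (HZd n); split; [exact Zn | left; exact En].
    + intros t Ht btn; apply (HZd n); split; [exact Zn | right; exists t; auto].
  - exists S1, S2; split; [exact H12 | split; [exact (Hnot _ H1) | split; [exact (Hnot _ H2) | exact Had]]].
Qed.

Lemma coinfinite_pair (MA : MA_sigma_centered) {T} (b : T -> nat -> Prop) :
  lt_continuum T -> (forall L, coinfinite (list_union L b)) ->
  exists S1 S2, disjoint S1 S2 /\ ~ finite_set S1 /\ ~ finite_set S2 /\
    forall t, almost_disjoint S1 (b t) /\ almost_disjoint S2 (b t).
Proof.
  intros HT Hb.
  set (Zs := fun k (Z : nat -> Prop) => exists n, k <= n /\ Z = fun m => m = n).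
  assert (Hinf : forall P, (forall k, exists Z, Zs k Z /\ subset Z P) -> ~ finite_set P).
  { intros P HP; apply infinite_nat_unbounded; intros k.
    destruct (HP k) as (Z & (n & Hkn & ->) & HZ); exists n; split; [exact Hkn | apply HZ; reflexivity]. }
  destruct (ma_almost_disjoint_pair T b Zs) as (S1 & S2 & H12 & H1 & H2 & Had);
    [intros k Z (n & _ & ->); apply finite_singleton | | exact MA | exact HT |].
  - intros k L E.
    destruct (proj1 (infinite_nat_unbounded _) (coinfinite_union_finite _ _ (Hb L) (finite_In E)) k)
      as (n & Hkn & Hn).
    exists (fun m => m = n); split; [exists n; auto |].
    intros m ->; split; [intros HE | intros t Ht Hbt]; apply Hn; [left | right; exists t]; auto.
  - exists S1, S2; split; [exact H12 | split; [exact (Hinf _ H1) | split; [exact (Hinf _ H2) | exact Had]]].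
Qed.

(* The set [S2] certifies that finite unions of the family stay co-infinite,
   which later stages outside the diagonalizable case need. *)
Definition good_extension (J : (nat -> Prop) -> Prop) {T} (b : T -> nat -> Prop) (a : nat -> Prop) :=
  ~ finite_set a /\ (forall t, almost_disjoint a (b t)) /\
  (weak_ideal J -> diagonalizable J -> (forall t, J (b t)) -> ~ J a) /\
  exists S2, ~ finite_set S2 /\ disjoint a S2 /\ forall t, almost_disjoint S2 (b t).

Lemma good_extension_exists (MA : MA_sigma_centered) {T} J (b : T -> nat -> Prop) :
  lt_continuum T -> (forall L, coinfinite (list_union L b)) -> exists a, good_extension J b a.
Proof.
  intros HT Hb.
  destruct (classic (weak_ideal J /\ diagonalizable J /\ forall t, J (b t)))
    as [(HJ & Hd & HbJ) | Hnot].
  - destruct (diagonalizable_pair MA J b HT HJ Hd HbJ) as (S1 & S2 & H12 & H1 & H2 & Had).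
    exists S1; split; [exact (weak_ideal_infinite J S1 HJ H1) | split; [intros t; apply Had | split]].
    + intros _ _ _; exact H1.
    + exists S2; split; [exact (weak_ideal_infinite J S2 HJ H2) | split; [exact H12 | intros t; apply Had]].
  - destruct (coinfinite_pair MA b HT Hb) as (S1 & S2 & H12 & H1 & H2 & Had).
    exists S1; split; [exact H1 | split; [intros t; apply Had | split]].
    + intros HJ Hd HbJ; destruct Hnot; auto.
    + exists S2; split; [exact H2 | split; [exact H12 | intros t; apply Had]].
Qed.

Section TransfiniteFamily.
Variable MA : MA_sigma_centered.
Variables (W : Type) (lt : W -> W -> Prop).
Hypothesis lt_wf : well_founded lt.
Hypothesis lt_trans : forall u v w, lt u v -> lt v w -> lt u w.
Hypothesis lt_trichotomy : forall v w, v = w \/ lt v w \/ lt w v.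
Hypothesis segment_small : forall w, lt_continuum {v | lt v w}.
Variable J : W -> (nat -> Prop) -> Prop.

Definition family_stage (w : W) (p : forall v, lt v w -> nat -> Prop) : nat -> Prop :=
  epsilon (inhabits (fun _ => False))
    (good_extension (J w) (fun t : {v | lt v w} => p (proj1_sig t) (proj2_sig t))).

Definition family : W -> nat -> Prop := Fix lt_wf (fun _ => nat -> Prop) family_stage.

Definition family_below (w : W) (t : {v | lt v w}) : nat -> Prop := family (proj1_sig t).

Lemma family_eq w : family w = family_stage w (fun v _ => family v).
Proof.
  unfold family at 1; rewrite Fix_eq; [reflexivity |].
  intros v f f' Hff'; unfold family_stage.
  replace (fun t : {u | lt u v} => f (proj1_sig t) (proj2_sig t))
    with (fun t : {u | lt u v} => f' (proj1_sig t) (proj2_sig t)); [reflexivity |].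
  extensionality t; symmetry; apply Hff'.
Qed.

Lemma list_has_max (l : list W) : l <> [] ->
  exists m, In m l /\ forall v, In v l -> v = m \/ lt v m.
Proof.
  induction l as [|x l IH]; intros Hl; [exfalso; apply Hl; reflexivity |].
  destruct l as [|x' l'].
  - exists x; split; [left; reflexivity | intros v [<- | []]; left; reflexivity].
  - destruct IH as (m & Hm & Hmax); [discriminate |].
    destruct (lt_trichotomy x m) as [<- | [Hxm | Hmx]].
    + exists x; split; [left; reflexivity |].
      intros v [<- | Hv]; [left; reflexivity | exact (Hmax v Hv)].
    + exists m; split; [right; exact Hm |].
      intros v [<- | Hv]; [right; exact Hxm | exact (Hmax v Hv)].
    + exists x; split; [left; reflexivity |]; intros v [<- | Hv]; [left; reflexivity |].
      right; destruct (Hmax v Hv) as [-> | Hvm]; [exact Hmx | exact (lt_trans _ _ _ Hvm Hmx)].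
Qed.

Lemma below_coinfinite w :
  (forall v, lt v w -> good_extension (J v) (family_below v) (family v)) ->
  forall L, coinfinite (list_union L (family_below w)).
Proof.
  intros IH [|t0 L].
  { apply coinfinite_subset with (1 := coinfinite_false); intros n (t & [] & _). }
  destruct (list_has_max (map (@proj1_sig _ _) (t0 :: L))) as (m & Hm & Hmax); [discriminate |].
  apply in_map_iff in Hm as (tm & <- & _).
  destruct (IH _ (proj2_sig tm)) as (_ & _ & _ & S2 & HS2 & Hdisj & HadS2).
  apply coinfinite_of_witness with S2; [exact HS2 |].
  apply finite_subset with
    (list_union (map (@proj1_sig _ _) (t0 :: L)) (fun v n => S2 n /\ family v n)).
  - apply finite_list_union; intros v Hv; destruct (Hmax v Hv) as [-> | Hvm].
    + apply finite_empty; intros n [S2n Hn]; exact (Hdisj n (conj Hn S2n)).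
    + exact (HadS2 (exist _ v Hvm)).
  - intros n [S2n (t & Ht & Hn)]; exists (proj1_sig t).
    split; [apply in_map, Ht | split; assumption].
Qed.

Lemma family_good w : good_extension (J w) (family_below w) (family w).
Proof.
  induction w as [w IH] using (well_founded_ind lt_wf).
  rewrite family_eq; unfold family_stage.
  apply (epsilon_spec (inhabits (fun _ => False)) (good_extension (J w) (family_below w))).
  apply good_extension_exists; [exact MA | apply segment_small | apply below_coinfinite, IH].
Qed.

Lemma diagonalizing_family : exists a : W -> nat -> Prop,
  (forall w, ~ finite_set (a w)) /\
  (forall v w, v <> w -> almost_disjoint (a v) (a w)) /\
  (forall w, weak_ideal (J w) -> diagonalizable (J w) -> exists v, ~ J w (a v)).
Proof.
  exists family; split; [| split].
  - intros w; apply (family_good w).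
  - intros v w Hvw; destruct (lt_trichotomy v w) as [-> | [Hlt | Hgt]]; [contradiction | |].
    + destruct (family_good w) as (_ & Had & _); apply almost_disjoint_sym, (Had (exist _ v Hlt)).
    + destruct (family_good v) as (_ & Had & _); exact (Had (exist _ w Hgt)).
  - intros w HJ Hd; destruct (classic (forall t, J w (family_below w t))) as [Hall | Hsome].
    + exists w; destruct (family_good w) as (_ & _ & Hpos & _); exact (Hpos HJ Hd Hall).
    + apply not_all_ex_not in Hsome as [t Ht]; exists (proj1_sig t); exact Ht.
Qed.

End TransfiniteFamily.

Lemma proj1_sig_injective {U} {P : U -> Prop} : Injective (@proj1_sig U P).
Proof. intros [x Hx] [y Hy]; simpl; intros ->; f_equal; apply proof_irrelevance. Qed.

Section InitialOrdinal.
Variable R : (nat -> bool) -> (nat -> bool) -> Prop.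
Hypothesis R_antisym : forall x y, R x y -> R y x -> x = y.
Hypothesis R_least : forall P : (nat -> bool) -> Prop,
  (exists x, P x) -> exists m, P m /\ forall y, P y -> R m y.

Lemma R_total x y : R x y \/ R y x.
Proof.
  destruct (R_least (fun z => z = x \/ z = y)) as (m & [-> | ->] & Hm);
    [eauto | left | right]; apply Hm; auto.
Qed.

Lemma R_trans x y z : R x y -> R y z -> R x z.
Proof.
  intros Hxy Hyz.
  destruct (R_least (fun u => u = x \/ u = y \/ u = z)) as (m & Hm & Hmin); [eauto |].
  destruct Hm as [-> | [-> | ->]].
  - apply Hmin; auto.
  - rewrite (R_antisym x y Hxy (Hmin x (or_introl eq_refl))); exact Hyz.
  - rewrite <- (R_antisym y z Hyz (Hmin y (or_intror (or_introl eq_refl)))); exact Hxy.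
Qed.

Definition R_lt v w : Prop := R v w /\ v <> w.

Lemma R_lt_wf : well_founded R_lt.
Proof.
  intros w; apply NNPP; intros Hw.
  destruct (R_least (fun x => ~ Acc R_lt x)) as (m & Hm & Hmin); [eauto |].
  apply Hm; constructor; intros y [Hym Hne]; apply NNPP; intros Hy.
  exact (Hne (R_antisym y m Hym (Hmin y Hy))).
Qed.

Definition large w : Prop := exists h : (nat -> bool) -> {v | R_lt v w}, Injective h.

(* The points with fewer than 𝔠 predecessors: a well-order of type 𝔠. *)
Definition continuum_ordinal : Type := {w | ~ large w}.

Definition co_lt (v w : continuum_ordinal) : Prop := R_lt (proj1_sig v) (proj1_sig w).

Lemma co_lt_wf : well_founded co_lt.
Proof. exact (wf_inverse_image _ _ R_lt (@proj1_sig _ _) R_lt_wf). Qed.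

Lemma co_lt_trans u v w : co_lt u v -> co_lt v w -> co_lt u w.
Proof.
  intros [Huv _] [Hvw Hvw']; split; [exact (R_trans _ _ _ Huv Hvw) |].
  intros E; apply Hvw', R_antisym; [exact Hvw | rewrite <- E; exact Huv].
Qed.

Lemma co_lt_trichotomy v w : v = w \/ co_lt v w \/ co_lt w v.
Proof.
  destruct (classic (proj1_sig v = proj1_sig w)) as [E | E];
    [left; apply proj1_sig_injective, E | right].
  destruct (R_total (proj1_sig v) (proj1_sig w)); [left | right]; split; auto using not_eq_sym.
Qed.

Lemma co_segment_lt_continuum w : lt_continuum {v | co_lt v w}.
Proof.
  split.
  - exists (fun v => proj1_sig (proj1_sig v)); intros u v E.
    apply proj1_sig_injective, proj1_sig_injective, E.
  - intros [h Hh]; apply (proj2_sig w).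
    exists (fun b => exist (fun v => R_lt v (proj1_sig w))
                           (proj1_sig (proj1_sig (h b))) (proj2_sig (h b))).
    intros b b' E; apply Hh, proj1_sig_injective, proj1_sig_injective.
    exact (f_equal (@proj1_sig _ _) E).
Qed.

Lemma continuum_ordinal_onto : exists s : continuum_ordinal -> nat -> bool, Surjective s.
Proof.
  destruct (classic (exists w, large w)) as [Hl | Hnl].
  - destruct (R_least large Hl) as (w0 & [h Hh] & Hmin).
    assert (Hsmall : forall b, ~ large (proj1_sig (h b))).
    { intros b Hb; destruct (proj2_sig (h b)) as [H H'].
      exact (H' (R_antisym _ _ H (Hmin _ Hb))). }
    apply (injective_onto_inverse
             (fun b => exist (fun w => ~ large w) (proj1_sig (h b)) (Hsmall b)));
      [exact (inhabits (fun _ => true)) |].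
    intros b b' E; apply Hh, proj1_sig_injective; exact (f_equal (@proj1_sig _ _) E).
  - exists (@proj1_sig _ _); intros b.
    exists (exist _ b (fun Hb => Hnl (ex_intro _ b Hb))); reflexivity.
Qed.

End InitialOrdinal.

Section BoolSeqWellOrder.
Import ssreflect ssrbool eqtype boolp wochoice.

Lemma bool_seq_well_order : exists R : (nat -> bool) -> (nat -> bool) -> Prop,
  (forall x y, R x y -> R y x -> x = y) /\
  (forall P : (nat -> bool) -> Prop, (exists x, P x) -> exists m, P m /\ forall y, P y -> R m y).
Proof.
have [R HR] := @well_ordering_principle (nat -> bool : eqType).
have Ranti := wo_chain_antisymmetric (withinW HR).
exists R; split => [x y Rxy Ryx|P [x Px]]; first by apply: Ranti => //; rewrite Rxy Ryx.
have [m [[/asboolP Pm minm] _]] := HR [pred z | `[< P z >]] (ex_intro _ x (asboolT Px)).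
by exists m; split=> // y Py; apply: minm; apply/asboolP.
Qed.

End BoolSeqWellOrder.

Lemma continuum_well_order : exists (W : Type) (lt : W -> W -> Prop),
  well_founded lt /\ (forall u v w, lt u v -> lt v w -> lt u w) /\
  (forall v w, v = w \/ lt v w \/ lt w v) /\ (forall w, lt_continuum {v | lt v w}) /\
  exists s : W -> nat -> bool, Surjective s.
Proof.
  destruct bool_seq_well_order as (R & R_antisym & R_least).
  exists (continuum_ordinal R), (co_lt R).
  split; [apply co_lt_wf | split; [apply co_lt_trans | split;
    [apply co_lt_trichotomy | split; [apply co_segment_lt_continuum | apply continuum_ordinal_onto]]]];
    assumption.
Qed.

Lemma bool_seq_onto_pred_fun {X} (g : nat -> X) : Surjective g ->
  exists dec : (nat -> bool) -> (X -> Prop) * (X -> nat), Surjective dec.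
Proof.
  intros Hg; set (gi := fun x => epsilon (inhabits 0) (fun n => g n = x)).
  assert (g_gi : forall x, g (gi x) = x)
    by (intros x; apply (epsilon_spec (inhabits 0) (fun n => g n = x)), Hg).
  exists (fun b => (fun x => b (Cantor.to_nat (gi x, 0)) = true,
                    fun x => epsilon (inhabits 0) (fun m => b (Cantor.to_nat (gi x, S m)) = true))).
  intros [C y].
  exists (fun j => match Cantor.of_nat j with
                   | (n, 0) => if excluded_middle_informative (C (g n)) then true else false
                   | (n, S m) => Nat.eqb m (y (g n))
                   end).
  f_equal; extensionality x.
  - apply propositional_extensionality; rewrite Cantor.cancel_of_to; simpl; rewrite g_gi.
    destruct (excluded_middle_informative (C x)); split; congruence || tauto.
  - transitivity (epsilon (inhabits 0) (fun m => m = y x)).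
    + f_equal; extensionality m; apply propositional_extensionality.
      rewrite Cantor.cancel_of_to; simpl; rewrite Nat.eqb_eq, g_gi; tauto.
    + apply (epsilon_spec (inhabits 0) (fun m => m = y x)); eauto.
Qed.

Definition image_ideal {X} (I : (X -> Prop) -> Prop) (D : X -> Prop) (y : X -> nat) :
  (nat -> Prop) -> Prop :=
  fun P => I (fun x => D x /\ P (y x)).

Definition hits_diagonalizable_images {X} (I : (X -> Prop) -> Prop) (A : (nat -> Prop) -> Prop) :=
  forall D y, weak_ideal (image_ideal I D y) -> diagonalizable (image_ideal I D y) ->
    exists a, A a /\ ~ image_ideal I D y a.

Section IdealsOnX.
Variables (X : Type) (I : (X -> Prop) -> Prop).
Hypothesis I_ideal : is_ideal I.

Lemma image_ideal_weak D y : finite_to_one_on y D -> weak_ideal (image_ideal I D y).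
Proof.
  intros Hy; destruct I_ideal as (Isub & Iun & Ifin & _); split; [| split].
  - intros P Q HP HQP; apply (Isub _ _ HP); intros x [Dx Qx]; split; auto.
  - intros P Q HP HQ; apply (Isub _ _ (Iun _ _ HP HQ)); intros x [Dx [Px | Qx]]; [left | right]; auto.
  - intros P [l Hl]; apply Ifin.
    apply finite_subset with (1 := finite_list_union l (fun k x => D x /\ y x = k) (fun k _ => Hy k)).
    intros x [Dx Px]; exists (y x); auto.
Qed.

Lemma image_ideal_diagonalizable C D y :
  omega_diag (restr I C) C -> subset D C -> I (fun x => C x /\ ~ D x) ->
  diagonalizable (image_ideal I D y).
Proof.
  intros (Zs & HZs & Havoid & Hescape) HDC HCD; destruct I_ideal as (Isub & Iun & _).
  set (B := fun P x => (D x /\ P (y x)) \/ (C x /\ ~ D x)).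
  assert (HB : forall P, image_ideal I D y P -> restr I C (fun x => B P x /\ C x)).
  { intros P HP; exists (B P); split; [apply Iun; auto | tauto]. }
  assert (HBC : forall P x, C x -> (D x -> P (y x)) -> B P x /\ C x).
  { intros P x Cx H; split; [destruct (classic (D x)); [left | right] |]; auto. }
  exists (fun k Z' => exists Z, Zs k Z /\ Z' = fun m => exists x, Z x /\ y x = m).
  split; [| split].
  - intros k _ (Z & HZ & ->); apply finite_image, (HZs k Z HZ).
  - intros k P HP; destruct (Havoid k _ (HB P HP)) as (Z & HZ & HZd).
    exists (fun m => exists x, Z x /\ y x = m); split; [eauto |].
    intros m ((x & Zx & <-) & Pm); apply (HZd x); split; [exact Zx |].
    apply HBC; [apply (HZs k Z HZ), Zx | auto].
  - intros P HP; destruct (Hescape _ (HB P HP)) as [k Hk]; exists k.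
    intros _ (Z & HZ & ->) HZP; apply (Hk Z HZ); intros x Zx.
    apply HBC; [apply (HZs k Z HZ), Zx | intros _; apply HZP; eauto].
Qed.

Lemma strongly_unboring_fibers {Y} (g : nat -> X) (x : X -> Y) :
  strongly_unboring I -> Surjective g -> (forall p, I (fun n => x n = p)) ->
  exists C, ~ I C /\ (forall p, finite_set (fun n => C n /\ x n = p)) /\ omega_diag (restr I C) C.
Proof.
  intros HSU Hg Hfib.
  set (code := fun p => epsilon (inhabits 0) (fun m => x (g m) = p)).
  assert (Hcode : forall n, x (g (code (x n))) = x n).
  { intros n; destruct (Hg n) as [m Hm].
    apply (epsilon_spec (inhabits 0) (fun m => x (g m) = x n)); exists m; rewrite Hm; reflexivity. }
  destruct (HSU (fun n => code (x n))) as (C & HC & Hfin & Hdiag).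
  - intros m; apply (proj1 I_ideal _ _ (Hfib (x (g m)))).
    intros n Hn; simpl in Hn; rewrite <- Hn; symmetry; apply Hcode.
  - exists C; split; [exact HC | split; [| exact Hdiag]].
    intros p; apply finite_subset with (1 := Hfin (code p)); intros n [Cn <-]; split; auto.
Qed.

End IdealsOnX.

Section MrowkaSpace.
Variable A : (nat -> Prop) -> Prop.
Hypothesis A_almost_disjoint : forall a b, A a -> A b -> a <> b -> almost_disjoint a b.
Hypothesis A_infinite : forall a, A a -> ~ finite_set a.

Lemma MAd_irrel a (h h' : A a) : MAd a h = MAd a h'.
Proof. f_equal; apply proof_irrelevance. Qed.

Definition ad_nbhd a (h : A a) (F : nat -> Prop) : mpoint A -> Prop :=
  fun q => q = MAd a h \/ exists k, q = MNat k /\ a k /\ ~ F k.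

Definition inf_nbhd (F : nat -> Prop) (G : list (nat -> Prop)) : mpoint A -> Prop :=
  fun q => q = MInf \/ (exists b h, q = MAd b h /\ ~ In b G) \/
           (exists k, q = MNat k /\ ~ F k /\ ~ exists b, In b G /\ b k).

Lemma nat_point_nbhd (U : mpoint A -> Prop) k :
  U (MNat k) -> exists V, basic_nbhd A (MNat k) V /\ subset V U.
Proof. intros Hk; exists (fun q => q = MNat k); split; [intros q; apply iff_refl | intros q ->; exact Hk]. Qed.

Lemma nat_open n : mopen A (fun q => q = MNat n).
Proof. intros p ->; apply nat_point_nbhd; reflexivity. Qed.

Lemma ad_open a h F : finite_set F -> mopen A (ad_nbhd a h F).
Proof.
  intros HF p [-> | (k & -> & Hk)]; [| apply nat_point_nbhd; right; exists k; auto].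
  exists (ad_nbhd a h F); split; [exists F; split; [exact HF | intros q; apply iff_refl] | intros q Hq; exact Hq].
Qed.

Lemma inf_open F G : finite_set F -> (forall b, In b G -> A b) -> mopen A (inf_nbhd F G).
Proof.
  intros HF HG p [-> | [(b & h & -> & HbG) | (k & -> & Hk)]].
  - exists (inf_nbhd F G); split; [| intros q Hq; exact Hq].
    exists F, G; split; [exact HF | split; [exact HG | intros q; apply iff_refl]].
  - set (F' := fun k => F k \/ list_union G (fun c k => b k /\ c k) k).
    exists (ad_nbhd b h F'); split.
    + exists F'; split; [| intros q; apply iff_refl].
      apply finite_union; [exact HF |]; apply finite_list_union; intros c Hc.
      apply A_almost_disjoint; auto; intros ->; contradiction.
    + intros q [-> | (k & -> & Hbk & HF'k)]; [right; left; eauto |].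
      right; right; exists k; split; [reflexivity | split].
      * intros Fk; apply HF'k; left; exact Fk.
      * intros (c & Hc & Hck); apply HF'k; right; exists c; auto.
  - apply nat_point_nbhd; right; right; exists k; auto.
Qed.

Definition separated (p q : mpoint A) : Prop :=
  exists U V, mopen A U /\ mopen A V /\ U p /\ V q /\ disjoint U V.

Lemma separated_sym p q : separated p q -> separated q p.
Proof.
  intros (U & V & HU & HV & Up & Vq & HUV); exists V, U; repeat split; auto.
  intros r [Vr Ur]; exact (HUV r (conj Ur Vr)).
Qed.

Lemma nbhd_avoiding_nat n q : q <> MNat n -> exists V, mopen A V /\ V q /\ ~ V (MNat n).
Proof.
  intros Hq; destruct q as [m | b h |].
  - exists (fun q => q = MNat m); split; [apply nat_open | split; [reflexivity | congruence]].
  - exists (ad_nbhd b h (fun k => k = n)); split; [apply ad_open, finite_singleton |].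
    split; [left; reflexivity | intros [E | (k & E & _ & Hk)]; congruence].
  - exists (inf_nbhd (fun k => k = n) []); split.
    + apply inf_open; [apply finite_singleton | intros b []].
    + split; [left; reflexivity | intros [E | [(b & h & E & _) | (k & E & Hk & _)]]; congruence].
Qed.

Lemma separated_nat n q : MNat n <> q -> separated (MNat n) q.
Proof.
  intros Hnq; destruct (nbhd_avoiding_nat n q (not_eq_sym Hnq)) as (V & HV & Vq & HVn).
  exists (fun r => r = MNat n), V; repeat split; auto using nat_open.
  intros r [-> Vr]; exact (HVn Vr).
Qed.

Lemma separated_ad a h b h' : a <> b -> separated (MAd a h) (MAd b h').
Proof.
  intros Hab; exists (ad_nbhd a h (fun _ => False)), (ad_nbhd b h' (fun k => a k /\ b k)).
  repeat split; try (left; reflexivity).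
  - apply ad_open, finite_empty; auto.
  - apply ad_open, A_almost_disjoint; auto.
  - intros r [[-> | (k & -> & Hak & _)] [E | (k' & E & Hbk & Hk)]]; try discriminate.
    + injection E as E; contradiction.
    + injection E as <-; apply Hk; split; assumption.
Qed.

Lemma separated_ad_inf a h : separated (MAd a h) MInf.
Proof.
  exists (ad_nbhd a h (fun _ => False)), (inf_nbhd (fun _ => False) [a]).
  repeat split; try (left; reflexivity).
  - apply ad_open, finite_empty; auto.
  - apply inf_open; [apply finite_empty; auto | intros b [<- | []]; exact h].
  - intros r [[-> | (k & -> & Hak & _)] [E | [(b & h' & E & Hb) | (k' & E & _ & Hk)]]];
      try discriminate.
    + injection E as <-; apply Hb; left; reflexivity.
    + injection E as <-; apply Hk; exists a; split; [left; reflexivity | exact Hak].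
Qed.

Lemma mrowka_hausdorff : mhausdorff A.
Proof.
  intros p q Hpq; destruct p as [n | a h |]; [exact (separated_nat n q Hpq) | |].
  - destruct q as [m | b h' |].
    + apply separated_sym, separated_nat; discriminate.
    + apply separated_ad; intros <-; apply Hpq, MAd_irrel.
    + apply separated_ad_inf.
  - destruct q as [m | b h' |]; [| | exfalso; apply Hpq; reflexivity].
    + apply separated_sym, separated_nat; discriminate.
    + apply separated_sym, separated_ad_inf.
Qed.

Lemma open_meets_nat_of_ad U a h : mopen A U -> U (MAd a h) -> exists k, U (MNat k).
Proof.
  intros HU Ha; destruct (HU _ Ha) as (V & (F & HF & HV) & HVU).
  destruct (infinite_diff a F (A_infinite a h) HF) as (k & Hak & HFk).
  exists k; apply HVU, HV; right; exists k; auto.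
Qed.

Lemma mrowka_separable : ~ finite_set A -> mseparable A.
Proof.
  intros HA; exists (fun p => exists n, p = MNat n).
  split; [exists MNat; intros p [n ->]; eauto |].
  intros U HU [p Hp]; destruct p as [n | a h |].
  - exists (MNat n); eauto.
  - destruct (open_meets_nat_of_ad U a h HU Hp) as [k Hk]; exists (MNat k); eauto.
  - destruct (HU _ Hp) as (V & (F & G & HF & HG & HV) & HVU).
    destruct (infinite_diff A (fun b => In b G) HA (finite_In G)) as (b & Hb & HbG).
    destruct (open_meets_nat_of_ad U b Hb HU) as [k Hk]; [apply HVU, HV; right; left; eauto |].
    exists (MNat k); eauto.
Qed.

Lemma converges_basic {X} (x : X -> mpoint A) B p :
  (forall V, basic_nbhd A p V -> finite_set (fun n => B n /\ ~ V (x n))) -> mconverges A x B.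
Proof.
  intros H; exists p; intros U HU Up; destruct (HU p Up) as (V & HV & HVU).
  apply finite_subset with (1 := H V HV); intros n [Bn HUn].
  split; [exact Bn | intros HVn; apply HUn, HVU, HVn].
Qed.

Lemma converges_const {X} (x : X -> mpoint A) B p :
  (forall n, B n -> x n = p) -> mconverges A x B.
Proof.
  intros H; exists p; intros U _ Up; apply finite_empty; intros n [Bn HUn].
  rewrite H in HUn; auto.
Qed.

Lemma converges_inf {X} (x : X -> mpoint A) B :
  (forall n, B n -> exists b h, x n = MAd b h) ->
  (forall b (h : A b), finite_set (fun n => B n /\ x n = MAd b h)) -> mconverges A x B.
Proof.
  intros HB Hfin; apply converges_basic with MInf; intros V (F & G & _ & HG & HV).
  apply finite_subset with (list_union G (fun b n => B n /\ exists h, x n = MAd b h)).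
  - apply finite_list_union; intros b Hb.
    apply finite_subset with (1 := Hfin b (HG b Hb)); intros n [Bn [h E]].
    split; [exact Bn | rewrite E; apply MAd_irrel].
  - intros n [Bn HVn]; destruct (HB n Bn) as (b & h & E); exists b; split; [| split; eauto].
    apply NNPP; intros HbG; apply HVn, HV; right; left; exists b, h; auto.
Qed.

Lemma converges_ad {X} (x : X -> mpoint A) B a (h : A a) (y : X -> nat) :
  (forall n, B n -> x n = MNat (y n) /\ a (y n)) ->
  (forall k, finite_set (fun n => B n /\ y n = k)) -> mconverges A x B.
Proof.
  intros HB Hfin; apply converges_basic with (MAd a h); intros V (F & [l Hl] & HV).
  apply finite_subset with (1 := finite_list_union l (fun k n => B n /\ y n = k) (fun k _ => Hfin k)).
  intros n [Bn HVn]; destruct (HB n Bn) as [E Ha]; exists (y n); split; [| auto].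
  apply Hl, NNPP; intros HF; apply HVn, HV; right; exists (y n); auto.
Qed.

Variables (X : Type) (I : (X -> Prop) -> Prop).
Hypothesis I_ideal : is_ideal I.
Hypothesis A_hits : hits_diagonalizable_images I A.

Lemma converging_positive_part (x : X -> mpoint A) C :
  ~ I C -> (forall p, finite_set (fun n => C n /\ x n = p)) -> omega_diag (restr I C) C ->
  exists B, ~ I B /\ mconverges A x B.
Proof.
  intros HC Hfib Hdiag; pose proof I_ideal as (Isub & Iun & Ifin & _).
  set (Cad := fun n => C n /\ exists b h, x n = MAd b h).
  destruct (classic (I Cad)) as [HCad | HCad].
  2:{ exists Cad; split; [exact HCad |]; apply converges_inf; [intros n [_ H]; exact H |].
      intros b h; apply finite_subset with (1 := Hfib (MAd b h)); intros n [[Cn _] E]; auto. }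
  set (D := fun n => C n /\ exists k, x n = MNat k).
  set (y := fun n => match x n with MNat k => k | _ => 0 end).
  assert (HDy : forall n, D n -> x n = MNat (y n))
    by (intros n [_ [k E]]; unfold y; rewrite E; reflexivity).
  assert (Hy : finite_to_one_on y D).
  { intros k; apply finite_subset with (1 := Hfib (MNat k)).
    intros n [Dn <-]; split; [apply Dn | apply HDy, Dn]. }
  assert (HCD : I (fun n => C n /\ ~ D n)).
  { apply (Isub _ _ (Iun _ _ HCad (Ifin _ (Hfib MInf)))).
    intros n [Cn HDn]; destruct (x n) as [k | b h |] eqn:E.
    - exfalso; apply HDn; split; eauto.
    - left; split; eauto.
    - right; split; auto. }
  destruct (A_hits D y (image_ideal_weak X I I_ideal D y Hy)
              (image_ideal_diagonalizable X I I_ideal C D y Hdiag (fun n Dn => proj1 Dn) HCD))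
    as (a & Ha & Hna).
  exists (fun n => D n /\ a (y n)); split; [exact Hna |].
  apply (converges_ad x _ a Ha y).
  - intros n [Dn Han]; auto.
  - intros k; apply finite_subset with (1 := Hy k); intros n [[Dn _] <-]; auto.
Qed.

Lemma mrowka_FinBW (g : nat -> X) : Surjective g -> strongly_unboring I -> FinBW I A.
Proof.
  intros Hg HSU; split; [exact mrowka_hausdorff |]; intros x.
  destruct (classic (exists p, ~ I (fun n => x n = p))) as [[p Hp] | Hall].
  - exists (fun n => x n = p); split; [exact Hp | apply converges_const with p; auto].
  - destruct (strongly_unboring_fibers X I I_ideal g x HSU Hg) as (C & HC & Hfib & Hdiag).
    + intros p; apply NNPP; intros Hp; apply Hall; eauto.
    + apply converging_positive_part with C; assumption.
Qed.

End MrowkaSpace.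

Lemma injective_of_almost_disjoint {W} (a : W -> nat -> Prop) :
  (forall w, ~ finite_set (a w)) -> (forall v w, v <> w -> almost_disjoint (a v) (a w)) ->
  Injective a.
Proof.
  intros Hinf Had v w E; apply NNPP; intros Hvw; apply (Hinf v).
  apply finite_subset with (1 := Had v w Hvw); intros n Hn; split; [exact Hn | rewrite <- E; exact Hn].
Qed.

Lemma injective_into_enumerated {W Y} (phi : W -> Y) (e : nat -> Y) :
  Injective phi -> (forall w, exists n, e n = phi w) -> exists psi : W -> nat, Injective psi.
Proof.
  intros Hphi He; exists (fun w => epsilon (inhabits 0) (fun n => e n = phi w)).
  intros v w E; simpl in E; apply Hphi.
  pose proof (epsilon_spec (inhabits 0) (fun n => e n = phi v) (He v)) as Hv.
  pose proof (epsilon_spec (inhabits 0) (fun n => e n = phi w) (He w)) as Hw.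
  simpl in Hv, Hw; rewrite E in Hv; congruence.
Qed.

Lemma range_mrowka_uncountable {W} (a : W -> nat -> Prop) :
  ~ (exists psi : W -> nat, Injective psi) ->
  (forall w, ~ finite_set (a w)) -> (forall v w, v <> w -> almost_disjoint (a v) (a w)) ->
  mrowka_family (fun P => exists w, a w = P) /\
  ~ countable_type (mpoint (fun P => exists w, a w = P)).
Proof.
  intros HW Hinf Had; pose proof (injective_of_almost_disjoint a Hinf Had) as Ha.
  split; [split; [| split] |].
  - intros [l Hl]; apply HW, injective_into_enumerated with (fun w => Some (a w)) (nth_error l).
    + intros v w E; injection E; apply Ha.
    + intros w; apply In_nth_error, Hl; exists w; reflexivity.
  - intros P [w <-]; apply Hinf.
  - intros P Q [v <-] [w <-] Hvw; apply Had; intros ->; apply Hvw; reflexivity.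
  - intros [f Hf]; apply HW, injective_into_enumerated with (fun w => MAd (a w) (ex_intro _ w eq_refl)) f.
    + intros v w E; injection E as E; apply Ha, E.
    + intros w; apply Hf.
Qed.

Theorem theorem5p6 :
  MA_sigma_centered ->
  forall (X : Type) (I : (X -> Prop) -> Prop),
    countably_infinite X -> is_ideal I -> strongly_unboring I ->
    exists A : (nat -> Prop) -> Prop,
      mrowka_family A /\ ~ countable_type (mpoint A) /\ mseparable A /\ FinBW I A.
Proof.
  intros MA X I [g [_ Hg]] HI HSU.
  destruct continuum_well_order as (W & lt & lt_wf & lt_trans & lt_tri & lt_seg & s & Hs).
  destruct (bool_seq_onto_pred_fun g Hg) as [dec Hdec].
  set (J := fun w => image_ideal I (fst (dec (s w))) (snd (dec (s w)))).
  destruct (diagonalizing_family MA W lt lt_wf lt_trans lt_tri lt_seg J) as (a & Hinf & Had & Hhit).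
  destruct (range_mrowka_uncountable a (surjective_bool_seq_uncountable s Hs) Hinf Had)
    as [(HAinf & HAmem & HAad) Hunc].
  exists (fun P => exists w, a w = P); split; [split; auto | split; [exact Hunc | split]].
  - apply mrowka_separable; assumption.
  - refine (mrowka_FinBW _ HAad X I HI _ g Hg HSU).
    intros D y HJ Hd; destruct (Hdec (D, y)) as [b Hb]; destruct (Hs b) as [w <-].
    assert (EJ : J w = image_ideal I D y) by (unfold J; rewrite Hb; reflexivity).
    rewrite <- EJ in HJ, Hd |- *; destruct (Hhit w HJ Hd) as [v Hv].
    exists (a v); split; [exists v; reflexivity | exact Hv].
Qed.
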